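(* Let $\phi\colon G'\to G$ be a covering map of digraphs such that every vertex and every edge of $G$ has exactly $d$ preimages, and let $\mathcal F$ be a sheaf on $G$. Then ${\rm m.e.}(\phi^*\mathcal F)=d\cdot{\rm m.e.}(\mathcal F)$. Moreover, if the maximum excess of $\mathcal F$ is attained at $U=\bigoplus_{v\in V_G}U_v\subset\mathcal F(V)$ (with $U_v\subset\mathcal F(v)$), then the maximum excess of $\phi^*\mathcal F$ is attained at $\phi^{-1}(U)=\bigoplus_{v'\in V_{G'}}U_{\phi(v')}$.
   Context: Digraphs are finite, with tail/head maps, multiple edges and loops allowed. A sheaf $\mathcal F$ on $G$: finite-dimensional $\mathbb F$-vector spaces $\mathcal F(P)$, $P\in V_G\sqcup E_G$, with linear maps $\mathcal F(t,e)\colon\mathcal F(e)\to\mathcal F(t_Ge)$, $\mathcal F(h,e)\colon\mathcal F(e)\to\mathcal F(h_Ge)$; $\mathcal F(V)=\bigoplus_v\mathcal F(v)$, $\mathcal F(E)=\bigoplus_e\mathcal F(e)$; $d_h,d_t\colon\mathcal F(E)\to\mathcal F(V)$ send the summand $\mathcal F(e)$ into $\mathcal F(h_Ge)$ resp. $\mathcal F(t_Ge)$ via the restriction maps. For a subspace $U\subset\mathcal F(V)$, $\Gamma_{\rm ht}(U)=\bigoplus_e\{w\in\mathcal F(e):d_hw\in U,\ d_tw\in U\}$, ${\rm excess}(\mathcal F,U)=\dim\Gamma_{\rm ht}(U)-\dim U$, ${\rm m.e.}(\mathcal F)=\max_U{\rm excess}(\mathcal F,U)$. A covering map $\phi\colon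 G'\to G$ is a digraph morphism mapping, for each vertex $v$, the edges with head $v$ bijectively onto those with head $\phi(v)$ and the edges with tail $v$ bijectively onto those with tail $\phi(v)$. The pullback $\phi^*\mathcal F$ has values $\mathcal F(\phi(P))$ and restriction maps $\mathcal F(h,\phi(e)),\mathcal F(t,\phi(e))$. *)

From HB Require Import structures.
From mathcomp Require Import all_boot all_order all_algebra.
Set Implicit Arguments. Unset Strict Implicit. Unset Printing Implicit Defensive.
Import Order.TTheory GRing.Theory Num.Theory.
Local Open Scope ring_scope.

Record digraph := Digraph {
  vert : finType;
  edge : finType;
  tl : edge -> vert;
  hd : edge -> vert }.

(* F(v) = K^(shdimv v),
   F(e) = K^(shdime e).  The restriction map F(h,e) : F(e) -> F(h e) is given by
   its matrix: the i-th coordinate of the image of the j-th basis vector of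
   F(e) is  resh e j i  (for j < shdime e, i < shdimv (hd e); other values are
   irrelevant).  Similarly rest for F(t,e). *)
Record sheaf (K : fieldType) (G : digraph) := Sheaf {
  shdimv : vert G -> nat;
  shdime : edge G -> nat;
  resh : edge G -> nat -> nat -> K;
  rest : edge G -> nat -> nat -> K }.

(* Direct sum  \bigoplus_i K^(n i), as functions on the coordinate set. *)
Definition Fsp (K : fieldType) (I : finType) (n : I -> nat) :=
  {ffun {i : I & 'I_(n i)} -> K^o}.

Section Sheaf.
Variables (K : fieldType) (G : digraph) (F : sheaf K G).

Definition FV := Fsp K (shdimv F).
Definition FE := Fsp K (shdime F).

Definition dfun (b : bool) (w : FE) : FV :=
  [ffun s : {v : vert G & 'I_(shdimv F v)} => \sum_(e : edge G | (if b then hd e else tl e) == tag s)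
              \sum_(j : 'I_(shdime F e))
                 w (Tagged (fun e => 'I_(shdime F e)) j) *
                 (if b then resh F e j (tagged s) else rest F e j (tagged s))].

Definition dmap (b : bool) : 'Hom(FE, FV) := linfun (dfun b).
Definition d_h := dmap true.
Definition d_t := dmap false.

(* the summand F(e) inside F(E), and F(v) inside F(V) *)
Definition SuppE (e : edge G) : {vspace FE} :=
  lker (linfun (fun w : FE => [ffun s => if tag s == e then 0 else w s] : FE)).
Definition SuppV (v : vert G) : {vspace FV} :=
  lker (linfun (fun x : FV => [ffun s => if tag s == v then 0 else x s] : FV)).

Definition Gamma_ht (U : {vspace FV}) : {vspace FE} :=
  (\sum_(e : edge G) (SuppE e :&: (d_h @^-1: U) :&: (d_t @^-1: U)))%VS.

Definition excess (U : {vspace FV}) : int :=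
  (\dim (Gamma_ht U))%:Z - (\dim U)%:Z.

Definition is_max_excess (z : int) : Prop :=
  (exists U, excess U = z) /\ (forall U, excess U <= z).

Definition attains_max_excess (U : {vspace FV}) : Prop :=
  forall U', excess U' <= excess U.

End Sheaf.

Definition is_morphism (G' G : digraph) (phiV : vert G' -> vert G)
  (phiE : edge G' -> edge G) : Prop :=
  (forall e', hd (phiE e') = phiV (hd e')) /\
  (forall e', tl (phiE e') = phiV (tl e')).

Definition is_covering (G' G : digraph) (phiV : vert G' -> vert G)
  (phiE : edge G' -> edge G) : Prop :=
  is_morphism phiV phiE /\
  (forall v' e, hd e = phiV v' -> exists! e', hd e' = v' /\ phiE e' = e) /\
  (forall v' e, tl e = phiV v' -> exists! e', tl e' = v' /\ phiE e' = e).

Definition pullback (K : fieldType) (G' G : digraph) (phiV : vert G' -> vert G)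
  (phiE : edge G' -> edge G) (F : sheaf K G) : sheaf K G' :=
  Sheaf (fun v' => shdimv F (phiV v')) (fun e' => shdime F (phiE e'))
        (fun e' => resh F (phiE e')) (fun e' => rest F (phiE e')).

(* the nat-indexed coordinate i of x at vertex v (0 if out of range) *)
Definition coordV (K : fieldType) (I : finType) (n : I -> nat) (x : Fsp K n)
  (v : I) (i : nat) : K :=
  \sum_(k : 'I_(n v) | (k : nat) == i) x (Tagged (fun v => 'I_(n v)) k).

Definition liftV (K : fieldType) (G' G : digraph) (phiV : vert G' -> vert G)
  (n : vert G -> nat) (v' : vert G') :
  'Hom(Fsp K n, Fsp K (fun v' => n (phiV v'))) :=
  linfun (fun x : Fsp K n =>
    [ffun s : {w : vert G' & 'I_(n (phiV w))} =>
       if tag s == v' then coordV x (phiV v') (tagged s) else 0]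
    : Fsp K (fun v' => n (phiV v'))).

Arguments FV {K G} F.
Arguments FE {K G} F.
Arguments dfun {K G} F b w.
Arguments dmap {K G} F b.
Arguments d_h {K G} F.
Arguments d_t {K G} F.
Arguments SuppE {K G} F e.
Arguments SuppV {K G} F v.
Arguments Gamma_ht {K G} F U.
Arguments excess {K G} F U.
Arguments is_max_excess {K G} F z.
Arguments attains_max_excess {K G} F U.
Arguments liftV {K G' G} phiV n v'.
Arguments pullback {K G' G} phiV phiE F.
Arguments coordV {K I n} x v i.

From HB Require Import structures.
From mathcomp Require Import all_boot all_order all_algebra.
From mathcomp Require Import zify.
From Stdlib Require Import Classical.
Set Implicit Arguments. Unset Strict Implicit. Unset Printing Implicit Defensive.
Import Order.TTheory GRing.Theory Num.Theory.
Local Open Scope ring_scope.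

(* Write F(V) = (+)_v F(v).  A subspace is split when it is the direct sum of
   its intersections with the summands F(v).  Along a covering phi with fibres
   of size d, the lift of U <= F(V) is the subspace of (phi^* F)(V) of vectors
   whose every component, copied back to F(phi v'), lies in U.  For split U
   both U and Gamma_ht(U) lift to d-fold copies, so excess(lift U) =
   d * excess(U) (lemma [excess_lift]).  Supermodularity of the excess gives
   every sheaf a unique largest maximizer, which is split.

   The heart of the proof, by induction on d, is that the largest maximizer W
   of phi^* F is the lift of the largest maximizer V of F.  Pairs of distinct
   points of a common fibre form a graph covering G' through either
   projection, with fibres of size d - 1, and the two pullbacks of phi^* F to
   it agree.  By induction both lifts of W are the largest maximizer there, so
   they coincide; this makes W invariant under moving a component inside a
   fibre, hence W is a lift, and comparing excesses gives W = lift V.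
   Theorem [theorem1] then follows: m.e.(phi^* F) = excess(lift V) =
   d * m.e.(F), and a maximizer (+)_v U_v of F lifts to (+)_v' U_(phi v'). *)

Lemma linfunE (K : fieldType) (aT rT : vectType K) (f : aT -> rT) :
  linear f -> forall x, linfun f x = f x.
Proof.
move=> lin_f x.
pose g : {linear aT -> rT} := HB.pack f (GRing.isLinear.Build _ _ _ _ f lin_f).
exact: (lfunE g x).
Qed.

Lemma memv_bigcap (K : fieldType) (vT : vectType K) (I : finType) (P : pred I)
    (Us : I -> {vspace vT}) (x : vT) :
  (x \in (\bigcap_(i | P i) Us i)%VS) = [forall i, P i ==> (x \in Us i)].
Proof.
rewrite memvE; apply/subv_bigcapP/forallP => [sub i|mem i Pi].
  by apply/implyP => Pi; rewrite memvE sub.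
by rewrite -memvE; move/implyP: (mem i); apply.
Qed.

Lemma dimv_leq_retract (K : fieldType) (V1 V2 : vectType K) (A : {vspace V1})
    (B : {vspace V2}) (f : 'Hom(V1, V2)) (g : 'Hom(V2, V1)) :
  (forall a, a \in A -> f a \in B /\ g (f a) = a) -> (\dim A <= \dim B)%N.
Proof.
move=> fgA; rewrite -(limg_dim_eq (f := f)).
  by apply/dimvS/subvP => _ /memv_imgP[a aA ->]; case: (fgA a aA).
apply/eqP; rewrite -subv0; apply/subvP => a /memv_capP[aA].
rewrite memv_ker memv0 => /eqP fa0.
by case: (fgA a aA) => _ <-; rewrite fa0 linear0.
Qed.

Lemma dimv_eq_inverse (K : fieldType) (V1 V2 : vectType K) (A : {vspace V1})
    (B : {vspace V2}) (f : 'Hom(V1, V2)) (g : 'Hom(V2, V1)) :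
  (forall a, a \in A -> f a \in B /\ g (f a) = a) ->
  (forall b, b \in B -> g b \in A /\ f (g b) = b) -> \dim A = \dim B.
Proof.
move=> fgA gfB; apply/eqP.
by rewrite eqn_leq (dimv_leq_retract fgA) (dimv_leq_retract gfB).
Qed.

Lemma sum_constant_fibres (I' I : finType) (phi : I' -> I) (f : I -> nat) (m : nat) :
  (forall i, #|[pred i' | phi i' == i]| = m) ->
  (\sum_(i' : I') f (phi i') = m * \sum_(i : I) f i)%N.
Proof.
move=> fibre_m; rewrite (partition_big phi predT) //= big_distrr /=.
apply: eq_bigr => i _; rewrite (eq_bigr (fun _ => f i)) => [|i' /eqP-> //].
by rewrite sum_nat_const fibre_m.
Qed.

(* A bounded nat-valued function on any (possibly infinite) type attains its
   maximum; this is where classical logic is used. *)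
Lemma exists_argmax (T : Type) (f : T -> nat) (B : nat) (t0 : T) :
  (forall t, (f t <= B)%N) -> exists t, forall t', (f t' <= f t)%N.
Proof.
move=> f_le_B; have [k] : exists k, (B - f t0 <= k)%N by exists (B - f t0)%N.
elim: k t0 => [|k IH] t0 gap.
  by exists t0 => t'; apply: leq_trans (f_le_B t') _; rewrite -subn_eq0 -leqn0.
have [t0_max|] := classic (forall t', (f t' <= f t0)%N); first by exists t0.
move/not_all_ex_not => [t1 /negP]; rewrite -ltnNge => lt01.
by apply: (IH t1); have := f_le_B t1; lia.
Qed.

Section Components.
Variables (K : fieldType) (I : finType) (n : I -> nat).
Local Notation S := (Fsp K n).
Implicit Types (x y : S).

Lemma coordV_in x i (k : 'I_(n i)) : coordV x i k = x (Tagged (fun i => 'I_(n i)) k).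
Proof.
rewrite /coordV (bigD1 k) //= big1 ?addr0 // => j /andP[/eqP j_k /eqP[]].
exact: val_inj.
Qed.

Lemma coordV_out x i k : (n i <= k)%N -> coordV x i k = 0.
Proof.
move=> out; rewrite /coordV big1 // => j /eqP j_k.
by move: (ltn_ord j); rewrite j_k ltnNge out.
Qed.

Lemma coordV_tag x s : coordV x (tag s) (nat_of_ord (tagged s)) = x s.
Proof. by case: s => i k; rewrite coordV_in. Qed.

Lemma coordV_ext x y : (forall i k, coordV x i k = coordV y i k) -> x = y.
Proof. by move=> eq_xy; apply/ffunP => s; rewrite -!coordV_tag eq_xy. Qed.

Lemma coordV_lin a x y i k : coordV (a *: x + y) i k = a * coordV x i k + coordV y i k.
Proof.
case: (ltnP k (n i)) => k_lt; last by rewrite !coordV_out // mulr0 addr0.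
by rewrite -[k]/(nat_of_ord (Ordinal k_lt)) !coordV_in !ffunE.
Qed.

Lemma coordV0 i k : coordV (0 : S) i k = 0.
Proof.
case: (ltnP k (n i)) => k_lt; last by rewrite coordV_out.
by rewrite -[k]/(nat_of_ord (Ordinal k_lt)) coordV_in ffunE.
Qed.

Lemma coordV_add x y i k : coordV (x + y) i k = coordV x i k + coordV y i k.
Proof. by have := coordV_lin 1 x y i k; rewrite scale1r mul1r. Qed.

Lemma coordV_sum (J : Type) (r : seq J) (P : pred J) (F : J -> S) i k :
  coordV (\sum_(j <- r | P j) F j) i k = \sum_(j <- r | P j) coordV (F j) i k.
Proof.
apply: (big_morph (fun x => coordV x i k)); last exact: coordV0.
by move=> x1 x2; apply: coordV_add.
Qed.

Lemma Fsp_empty_subspace : (I -> False) -> forall U : {vspace S}, U = 0%VS.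
Proof.
move=> no_index U; apply/vspaceP => x; rewrite memv0.
have -> : x = 0 by apply: coordV_ext => i; case: (no_index i).
by rewrite eqxx mem0v.
Qed.

Definition single (i : I) (g : nat -> K) : S :=
  [ffun s : {j : I & 'I_(n j)} => if tag s == i then g (nat_of_ord (tagged s)) else 0].

Lemma coordV_single i g j k :
  coordV (single i g) j k = if (j == i) && (k < n j)%N then g k else 0.
Proof.
case: (ltnP k (n j)) => k_lt; last by rewrite coordV_out // andbF.
by rewrite andbT -[k]/(nat_of_ord (Ordinal k_lt)) coordV_in ffunE.
Qed.

Definition prj (i : I) : 'Hom(S, S) := linfun (fun x => single i (coordV x i)).

Lemma prjE i x : prj i x = single i (coordV x i).
Proof.
apply: linfunE => a x1 y1; apply: coordV_ext => j k.
by rewrite coordV_lin !coordV_single coordV_lin; case: ifP; rewrite ?mulr0 ?addr0.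
Qed.

Lemma coordV_prj i x j k : coordV (prj i x) j k = if j == i then coordV x j k else 0.
Proof.
rewrite prjE coordV_single; case: eqP => [->|] //=.
by case: ltnP => // k_ge; rewrite coordV_out.
Qed.

(* The i-th summand K^(n i) of S, written as in the definition of [SuppV]. *)
Definition summand (i : I) : {vspace S} :=
  lker (linfun (fun x : S => [ffun s => if tag s == i then 0 else x s] : S)).

Lemma memv_summand x i : (x \in summand i) = (prj i x == x).
Proof.
rewrite memv_ker linfunE; last first.
  by move=> a x1 y1; apply/ffunP => s; rewrite !ffunE; case: ifP; rewrite ?scaler0 ?addr0.
apply/eqP/eqP => [kill|fixed].
  apply: coordV_ext => j k; rewrite coordV_prj; case: eqP => // /eqP j_i.
  case: (ltnP k (n j)) => k_lt; last by rewrite coordV_out.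
  rewrite -[k]/(nat_of_ord (Ordinal k_lt)) coordV_in.
  by move/ffunP: kill => /(_ (Tagged _ (Ordinal k_lt))); rewrite !ffunE /= (negPf j_i).
apply/ffunP => s; rewrite !ffunE; case: eqP => // /eqP s_i.
by rewrite -coordV_tag -fixed coordV_prj (negPf s_i).
Qed.

Lemma prj_summand i j x : x \in summand j -> prj i x = if i == j then x else 0.
Proof.
rewrite memv_summand => /eqP fixed; case: eqP => [->//|/eqP i_j].
apply: coordV_ext => l k; rewrite coordV_prj coordV0 -fixed coordV_prj.
by case: eqP => // ->; rewrite (negPf i_j).
Qed.

Lemma coordV_summand x i j k : x \in summand i -> j != i -> coordV x j k = 0.
Proof. by rewrite memv_summand => /eqP <- j_i; rewrite coordV_prj (negPf j_i). Qed.

Lemma single_summand i g : single i g \in summand i.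
Proof.
rewrite memv_summand; apply/eqP/coordV_ext => j k; rewrite coordV_prj coordV_single.
by case: eqP => [->|]; rewrite ?eqxx.
Qed.

Lemma prj_in_summand i x : prj i x \in summand i.
Proof. by rewrite prjE single_summand. Qed.

Lemma sum_prj x : x = \sum_i prj i x.
Proof.
apply: coordV_ext => j k; rewrite coordV_sum (bigD1 j) //= big1 ?addr0.
  by rewrite coordV_prj eqxx.
by move=> i /negPf j_i; rewrite coordV_prj eq_sym j_i.
Qed.

Lemma prj_sum_summands (us : I -> S) i :
  (forall j, us j \in summand j) -> prj i (\sum_j us j) = us i.
Proof.
move=> us_in; rewrite linear_sum (bigD1 i) //= big1 ?addr0.
  by rewrite (prj_summand i (us_in i)) eqxx.
by move=> j j_i; rewrite (prj_summand i (us_in j)) eq_sym (negPf j_i).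
Qed.

Lemma mem_sum_summands (Us : I -> {vspace S}) x :
  (forall i, (Us i <= summand i)%VS) ->
  (x \in (\sum_i Us i)%VS) = [forall i, prj i x \in Us i].
Proof.
move=> sUs; apply/memv_sumP/forallP => [[us us_in ->] i|prj_in].
  rewrite prj_sum_summands ?us_in // => j; exact: (subvP (sUs j)) (us_in j isT).
by exists (fun i => prj i x); [move=> i _; apply: prj_in | exact: sum_prj].
Qed.

Lemma dim_sum_summands (Us : I -> {vspace S}) :
  (forall i, (Us i <= summand i)%VS) -> \dim (\sum_i Us i) = (\sum_i \dim (Us i))%N.
Proof.
move=> sUs; apply/directvP/directv_sum_independent => us us_in sum0 i _.
rewrite -(prj_sum_summands (us := us) i); first by rewrite sum0 linear0.
by move=> j; exact: (subvP (sUs j)) (us_in j isT).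
Qed.

(* W is split when it is the direct sum of its intersections with the summands,
   i.e. when it is stable under all the projections. *)
Definition is_split (W : {vspace S}) := forall i x, x \in W -> prj i x \in W.

Lemma split_sum_summands (Us : I -> {vspace S}) :
  (forall i, (Us i <= summand i)%VS) -> is_split (\sum_i Us i).
Proof.
move=> sUs i x; rewrite !mem_sum_summands // => /forallP prj_in; apply/forallP => j.
rewrite (prj_summand j (prj_in_summand i x)).
by case: eqP => [->|_]; [exact: prj_in | exact: mem0v].
Qed.

Lemma split_decomposition W : is_split W -> W = (\sum_i (W :&: summand i))%VS.
Proof.
move=> splitW; apply/vspaceP => x; rewrite mem_sum_summands => [|i]; last exact: capvSr.
apply/idP/forallP => [xW i|prj_in]; first by rewrite memv_cap splitW // prj_in_summand.
rewrite (sum_prj x) memv_suml // => i _.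
by move/memv_capP: (prj_in i) => [].
Qed.

Lemma dim_split W : is_split W -> \dim W = (\sum_i \dim (W :&: summand i))%N.
Proof.
move=> splitW; rewrite {1}(split_decomposition splitW) dim_sum_summands // => i.
exact: capvSr.
Qed.

End Components.
Arguments single {K I n} i g.
Arguments prj {K I n} i.
Arguments summand {K I n} i.
Arguments is_split {K I n} W.
Arguments single_summand {K I n} i g.

Section Transport.
Variables (K : fieldType) (I' I : finType) (phi : I' -> I) (n' : I' -> nat) (n : I -> nat).
Hypothesis n'_phi : forall i', n' i' = n (phi i').
Local Notation S := (Fsp K n).
Local Notation S' := (Fsp K n').

Definition place (i' : I') : 'Hom(S, S') := linfun (fun y => single i' (coordV y (phi i'))).
Definition push (i' : I') : 'Hom(S', S) := linfun (fun x => single (phi i') (coordV x i')).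

Lemma coordV_place i' y j' k :
  coordV (place i' y) j' k = if (j' == i') && (k < n' j')%N then coordV y (phi i') k else 0.
Proof.
rewrite linfunE ?coordV_single // => a x1 y1; apply: coordV_ext => j k'.
by rewrite coordV_lin !coordV_single coordV_lin; case: ifP; rewrite ?mulr0 ?addr0.
Qed.

Lemma coordV_push i' x j k :
  coordV (push i' x) j k = if (j == phi i') && (k < n j)%N then coordV x i' k else 0.
Proof.
rewrite linfunE ?coordV_single // => a x1 y1; apply: coordV_ext => j' k'.
by rewrite coordV_lin !coordV_single coordV_lin; case: ifP; rewrite ?mulr0 ?addr0.
Qed.

Lemma place_in_summand i' y : place i' y \in summand i'.
Proof.
rewrite memv_summand; apply/eqP/coordV_ext => j k; rewrite coordV_prj coordV_place.
by case: eqP.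
Qed.

Lemma push_in_summand i' x : push i' x \in summand (phi i').
Proof.
rewrite memv_summand; apply/eqP/coordV_ext => j k; rewrite coordV_prj coordV_push.
by case: eqP.
Qed.

Lemma push_place i' y : push i' (place i' y) = prj (phi i') y.
Proof.
apply: coordV_ext => j k; rewrite coordV_push coordV_prj coordV_place eqxx /=.
case: eqP => [->|_]; last by rewrite andFb.
by rewrite n'_phi /=; case: ltnP => // k_ge; rewrite coordV_out.
Qed.

Lemma push_place_neq j' i' y : j' != i' -> push j' (place i' y) = 0.
Proof.
move=> j'_i'; apply: coordV_ext => j k.
by rewrite coordV_push coordV_place (negPf j'_i') coordV0; case: ifP.
Qed.

Lemma place_push i' x : place i' (push i' x) = prj i' x.
Proof.
apply: coordV_ext => j k; rewrite coordV_place coordV_prj coordV_push eqxx /=.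
case: eqP => [->|_]; last by rewrite andFb.
by rewrite n'_phi; case: ltnP => // k_ge; rewrite coordV_out // n'_phi.
Qed.

Lemma place_push_neq i' j' x : phi i' != phi j' -> place i' (push j' x) = 0.
Proof.
move=> fibres_differ; apply: coordV_ext => l k.
by rewrite coordV_place coordV_push (negPf fibres_differ) coordV0; case: ifP.
Qed.

Lemma push_prj i' j' x : push i' (prj j' x) = if j' == i' then push i' x else 0.
Proof.
apply: coordV_ext => j k; case: (eqVneq j' i') => [->|j'_i'].
  by rewrite !coordV_push coordV_prj eqxx.
by rewrite coordV0 coordV_push coordV_prj (eq_sym i' j') (negPf j'_i'); case: ifP.
Qed.

Lemma place_prj i' j y : place i' (prj j y) = if phi i' == j then place i' y else 0.
Proof.
apply: coordV_ext => l k; rewrite coordV_place coordV_prj.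
case: (eqVneq (phi i') j) => [i'_j|i'_j] /=; first by rewrite coordV_place i'_j.
by rewrite coordV0; case: ifP.
Qed.

Definition lift (U : {vspace S}) : {vspace S'} := (\bigcap_(i' : I') (push i' @^-1: U))%VS.

Lemma mem_lift U x : (x \in lift U) = [forall i', push i' x \in U].
Proof. by rewrite memv_bigcap; apply: eq_forallb => i'; rewrite -memv_preim. Qed.

Lemma liftS U W : (U <= W)%VS -> (lift U <= lift W)%VS.
Proof.
move=> sUW; apply/subvP => x; rewrite !mem_lift => /forallP pushU.
by apply/forallP => i'; apply: (subvP sUW).
Qed.

Lemma lift_split U : is_split (lift U).
Proof.
move=> j' x; rewrite !mem_lift => /forallP pushU; apply/forallP => i'.
by rewrite push_prj; case: eqP => _; rewrite ?mem0v.
Qed.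

Lemma place_mem_lift U i' y :
  y \in summand (phi i') -> (place i' y \in lift U) = (y \in U).
Proof.
move=> y_in; rewrite mem_lift; apply/forallP/idP => [pushU|yU j'].
  by move: (pushU i'); rewrite push_place (prj_summand _ y_in) eqxx.
case: (eqVneq j' i') => [->|j'_i']; first by rewrite push_place (prj_summand _ y_in) eqxx.
by rewrite push_place_neq // mem0v.
Qed.

Lemma dim_lift_component U i' :
  \dim (lift U :&: summand i') = \dim (U :&: summand (phi i')).
Proof.
apply: (dimv_eq_inverse (f := push i') (g := place i')) => a /memv_capP[a_in a_sum].
  split; last by rewrite place_push (prj_summand _ a_sum) eqxx.
  by rewrite memv_cap push_in_summand andbT; move: a_in; rewrite mem_lift => /forallP.
split; last by rewrite push_place (prj_summand _ a_sum) eqxx.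
by rewrite memv_cap place_in_summand andbT place_mem_lift.
Qed.

Lemma dim_lift U m : is_split U -> (forall i, #|[pred i' | phi i' == i]| = m) ->
  \dim (lift U) = (m * \dim U)%N.
Proof.
move=> splitU fibre_m; rewrite dim_split; last exact: lift_split.
rewrite (eq_bigr (fun i' => \dim (U :&: summand (phi i')))) => [|i' _]; last first.
  exact: dim_lift_component.
by rewrite (sum_constant_fibres (fun i => \dim (U :&: summand i)) fibre_m) -dim_split.
Qed.

Lemma lift_sum_summands (Us : I -> {vspace S}) :
  (forall i, (Us i <= summand i)%VS) ->
  lift (\sum_i Us i) = (\sum_(i' : I') (place i' @: Us (phi i')))%VS.
Proof.
move=> sUs; apply/vspaceP => x; rewrite mem_lift mem_sum_summands; last first.
  by move=> i'; apply/subvP => _ /memv_imgP[u _ ->]; apply: place_in_summand.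
apply: eq_forallb => i'.
have -> : (push i' x \in (\sum_i Us i)%VS) = (push i' x \in Us (phi i')).
  rewrite mem_sum_summands //; apply/forallP/idP => [/(_ (phi i'))|pushU j].
    by rewrite (prj_summand _ (push_in_summand i' x)) eqxx.
  by rewrite (prj_summand _ (push_in_summand i' x)); case: eqP => [->//|_]; exact: mem0v.
apply/idP/idP => [pushU|/memv_imgP[u u_in prj_x]].
  by rewrite -place_push; apply: memv_img.
have <- : push i' (prj i' x) = push i' x by rewrite push_prj eqxx.
by rewrite prj_x push_place (prj_summand _ (subvP (sUs _) _ u_in)) eqxx.
Qed.

Definition descend (W : {vspace S'}) : {vspace S} :=
  (\bigcap_(i' : I') (place i' @^-1: W))%VS.

Lemma mem_descend W y : (y \in descend W) = [forall i', place i' y \in W].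
Proof. by rewrite memv_bigcap; apply: eq_forallb => i'; rewrite -memv_preim. Qed.

Lemma descend_split W : is_split (descend W).
Proof.
move=> i y; rewrite !mem_descend => /forallP placeW; apply/forallP => i'.
by rewrite place_prj; case: eqP => _; [exact: placeW | exact: mem0v].
Qed.

Lemma lift_descend W : is_split W ->
  (forall x y c, phi x = phi y -> c \in summand y ->
     (place x (push y c) \in W) = (c \in W)) ->
  lift (descend W) = W.
Proof.
move=> splitW fibre_inv; apply/vspaceP => x'; rewrite mem_lift.
apply/forallP/idP => [descW|x'W y].
  rewrite (sum_prj x') memv_suml // => y _; rewrite -place_push.
  by move: (descW y); rewrite mem_descend => /forallP.
rewrite mem_descend; apply/forallP => x.
have [fibre_xy|/place_push_neq->] := eqVneq (phi x) (phi y); last exact: mem0v.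
have <- : push y (prj y x') = push y x' by rewrite push_prj eqxx.
by rewrite fibre_inv ?prj_in_summand ?splitW.
Qed.

End Transport.
Arguments place {K I' I} phi {n' n} i'.
Arguments push {K I' I} phi {n' n} i'.
Arguments lift {K I' I} phi {n' n} U.
Arguments descend {K I' I} phi {n' n} W.
Arguments place_in_summand {K I' I phi n' n} i' y.
Arguments push_in_summand {K I' I phi n' n} i' x.

Section Excess.
Variables (K : fieldType) (G : digraph) (F : sheaf K G).
Local Notation nV := (shdimv F).
Local Notation nE := (shdime F).

Definition endpt (b : bool) (e : edge G) := if b then hd e else tl e.
Definition restr (b : bool) (e : edge G) := if b then resh F e else rest F e.

Lemma SuppE_summand e : SuppE F e = summand e. Proof. by []. Qed.

Lemma coordV_dfun b w v i :
  coordV (dfun F b w) v i = if (i < nV v)%N then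
    \sum_(e | endpt b e == v) \sum_(0 <= j < nE e) coordV w e j * restr b e j i else 0.
Proof.
case: ltnP => i_lt; last by rewrite coordV_out.
rewrite -[i]/(nat_of_ord (Ordinal i_lt)) coordV_in ffunE /=.
apply: eq_bigr => e _; rewrite big_mkord; apply: eq_bigr => j _.
by rewrite coordV_in /restr; case: b.
Qed.

Lemma dmapE b w : dmap F b w = dfun F b w.
Proof.
apply: linfunE => a x y; apply: coordV_ext => v i.
rewrite coordV_lin !coordV_dfun; case: ltnP => _; last by rewrite mulr0 addr0.
rewrite mulr_sumr -big_split /=; apply: eq_bigr => e _.
rewrite mulr_sumr -big_split /=; apply: eq_bigr => j _.
by rewrite coordV_lin mulrDl mulrA.
Qed.

Lemma coordV_dmap_summand b e w v i : w \in summand e ->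
  coordV (dmap F b w) v i = if (v == endpt b e) && (i < nV v)%N then
    \sum_(0 <= j < nE e) coordV w e j * restr b e j i else 0.
Proof.
move=> w_in; rewrite dmapE coordV_dfun; case: ltnP => i_lt; last by rewrite andbF.
rewrite andbT; case: eqP => [->|v_e].
  rewrite (bigD1 e) //= [X in _ + X]big1 ?addr0 // => e' /andP[_ e'_e].
  by apply: big1 => j _; rewrite (coordV_summand _ w_in e'_e) mul0r.
apply: big1 => e' /eqP e'_v; apply: big1 => j _.
have e'_e : e' != e by apply/eqP => eq_e; apply: v_e; rewrite -e'_v eq_e.
by rewrite (coordV_summand _ w_in e'_e) mul0r.
Qed.

Lemma dmap_summand b e w : w \in summand e -> dmap F b w \in summand (endpt b e).
Proof.
move=> w_in; rewrite memv_summand; apply/eqP/coordV_ext => v i.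
rewrite coordV_prj; case: eqP => [->//|/eqP v_e].
by rewrite (coordV_dmap_summand _ _ _ w_in) (negPf v_e).
Qed.

Lemma mem_Gamma U x : (x \in Gamma_ht F U) =
  [forall e, (d_h F (prj e x) \in U) && (d_t F (prj e x) \in U)].
Proof.
rewrite /Gamma_ht mem_sum_summands => [|e]; last by rewrite -capvA capvSl.
by apply: eq_forallb => e; rewrite !memv_cap -!memv_preim prj_in_summand.
Qed.

Lemma GammaS U W : (U <= W)%VS -> (Gamma_ht F U <= Gamma_ht F W)%VS.
Proof.
move=> sUW; apply/subvP => x; rewrite !mem_Gamma => /forallP dU.
apply/forallP => e; case/andP: (dU e) => dhU dtU.
by rewrite (subvP sUW _ dhU) (subvP sUW _ dtU).
Qed.

Lemma Gamma_cap U W : Gamma_ht F (U :&: W) = (Gamma_ht F U :&: Gamma_ht F W)%VS.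
Proof.
apply/vspaceP => x; rewrite memv_cap !mem_Gamma.
apply/forallP/andP => [inUW|[/forallP inU /forallP inW] e].
  by split; apply/forallP => e; move: (inUW e);
    rewrite !memv_cap => /andP[/andP[? ?] /andP[? ?]]; apply/andP.
by move: (inU e) (inW e); rewrite !memv_cap => /andP[-> ->] /andP[-> ->].
Qed.

Lemma excess_supermodular U W :
  excess F U + excess F W <= excess F (U + W) + excess F (U :&: W).
Proof.
rewrite /excess Gamma_cap.
have dimUW := dimv_sum_cap U W.
have dimGUW := dimv_sum_cap (Gamma_ht F U) (Gamma_ht F W).
have : (\dim (Gamma_ht F U + Gamma_ht F W) <= \dim (Gamma_ht F (U + W)))%N.
  by apply: dimvS; rewrite subv_add !GammaS ?addvSl ?addvSr.
lia.
Qed.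

Lemma exists_maximizer : exists W, attains_max_excess F W.
Proof.
pose m U := (\dim (Gamma_ht F U) + (\dim {:FV F} - \dim U))%N.
have excessE U : excess F U = (m U)%:Z - (\dim {:FV F})%:Z.
  by rewrite /excess /m; have := dimvS (subvf U); lia.
have [W maxW] : exists W, forall U, (m U <= m W)%N.
  apply: (exists_argmax (B := (\dim {:FE F} + \dim {:FV F})%N) 0%VS) => U.
  by rewrite /m; have := dimvS (subvf (Gamma_ht F U)); lia.
by exists W => U; rewrite !excessE; have := maxW U; lia.
Qed.

Definition is_largest_maximizer (W : {vspace FV F}) :=
  attains_max_excess F W /\ (forall U, excess F U = excess F W -> (U <= W)%VS).

(* By supermodularity, the sum of two maximizers is a maximizer. *)
Lemma maximizer_addv U W : attains_max_excess F W -> excess F U = excess F W ->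
  excess F (U + W) = excess F W.
Proof.
move=> maxW exU; have := excess_supermodular U W.
have := maxW (U + W)%VS; have := maxW (U :&: W)%VS; lia.
Qed.

Lemma largest_maximizer_exists : exists W, is_largest_maximizer W.
Proof.
have [W0 maxW0] := exists_maximizer.
pose T := {U | excess F U = excess F W0}.
have [[W exW] dimW] := @exists_argmax T (fun U => \dim (sval U)) (\dim {:FV F})
   (exist _ W0 erefl) (fun U => dimvS (subvf _)).
have maxW : attains_max_excess F W by move=> U; rewrite exW.
exists W; split=> // U exU.
have exUW : excess F (U + W) = excess F W0 by rewrite (maximizer_addv maxW exU).
have /= dimUW := dimW (exist _ (U + W)%VS exUW).
have /eqP-> : W == (U + W)%VS by rewrite eqEdim addvSr dimUW.
exact: addvSl.
Qed.

Lemma largest_maximizer_uniq W1 W2 :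
  is_largest_maximizer W1 -> is_largest_maximizer W2 -> W1 = W2.
Proof.
move=> [max1 large1] [max2 large2]; have ex12 : excess F W1 = excess F W2.
  by apply/eqP; rewrite eq_le max1 max2.
by apply/subv_anti; rewrite large2 // large1.
Qed.

(* Replacing W by the vectors all of whose components lie in W cannot shrink
   Gamma_ht (d_h, d_t map each F(e) into a single F(v)), hence does not lower
   the excess; so the largest maximizer is split. *)
Lemma largest_maximizer_split W : is_largest_maximizer W -> is_split W.
Proof.
move=> [maxW largeW].
pose Ws := (\bigcap_v (prj v @^-1: W))%VS.
have memWs x : (x \in Ws) = [forall v, prj v x \in W].
  by rewrite memv_bigcap; apply: eq_forallb => v; rewrite -memv_preim.
have sWsW : (Ws <= W)%VS.
  apply/subvP => x; rewrite memWs => /forallP prjW.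
  by rewrite (sum_prj x) memv_suml // => v _; apply: prjW.
have sGamma : (Gamma_ht F W <= Gamma_ht F Ws)%VS.
  apply/subvP => x; rewrite !mem_Gamma => /forallP dW; apply/forallP => e.
  case/andP: (dW e) => dhW dtW; rewrite !memWs; apply/andP; split; apply/forallP => v.
    rewrite (prj_summand v (dmap_summand true (prj_in_summand e x))).
    by case: eqP => _; rewrite ?mem0v.
  rewrite (prj_summand v (dmap_summand false (prj_in_summand e x))).
  by case: eqP => _; rewrite ?mem0v.
have Ws_W : Ws = W.
  apply/eqP; rewrite eqEdim sWsW /=.
  have := maxW Ws; have := dimvS sGamma; rewrite /excess.
  by move: (\dim Ws) (\dim W) (\dim (Gamma_ht F Ws)) (\dim (Gamma_ht F W)); lia.
move=> v x xW; have : x \in Ws by rewrite Ws_W.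
by rewrite memWs => /forallP.
Qed.

End Excess.
Arguments is_largest_maximizer {K G} F W.

(* Stating this by equations rather than as [F' = pullback F]
   lets us compare the two pullbacks of a sheaf to the fibre product below. *)
Definition is_pullback (K : fieldType) (G' G : digraph) (phiV : vert G' -> vert G)
  (phiE : edge G' -> edge G) (F : sheaf K G) (F' : sheaf K G') :=
  [/\ forall v', shdimv F' v' = shdimv F (phiV v'),
      forall e', shdime F' e' = shdime F (phiE e'),
      forall e', resh F' e' = resh F (phiE e') &
      forall e', rest F' e' = rest F (phiE e')].

Lemma morphism_endpt (G' G : digraph) (phiV : vert G' -> vert G)
    (phiE : edge G' -> edge G) :
  is_morphism phiV phiE -> forall b e', endpt b (phiE e') = phiV (endpt b e').
Proof. by case=> hdE tlE [] e'; rewrite /endpt. Qed.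

(* Lifting a split subspace along a covering with fibres of size m multiplies
   the excess by m: both U and Gamma_ht(U) are lifted. *)
Section LiftExcess.
Variables (K : fieldType) (G' G : digraph) (phiV : vert G' -> vert G)
  (phiE : edge G' -> edge G) (F : sheaf K G) (F' : sheaf K G').
Hypothesis pbF : is_pullback phiV phiE F F'.
Hypothesis morph : is_morphism phiV phiE.

Let dimV' v' : shdimv F' v' = shdimv F (phiV v'). Proof. by case: pbF. Qed.
Let dimE' e' : shdime F' e' = shdime F (phiE e'). Proof. by case: pbF. Qed.
Let restr' b e' : restr F' b e' = restr F b (phiE e').
Proof. by case: pbF => _ _ reshE restE; case: b; rewrite /restr. Qed.

Lemma dmap_place b e' w : w \in summand (phiE e') ->
  dmap F' b (place phiE e' w) = place phiV (endpt b e') (dmap F b w).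
Proof.
move=> w_in; apply: coordV_ext => v' k.
rewrite (coordV_dmap_summand _ _ _ (place_in_summand _ _)) coordV_place.
case: eqP => [->|]; last by rewrite !andFb.
rewrite /= (coordV_dmap_summand _ _ _ w_in) (morphism_endpt morph) eqxx /= -dimV'.
case: ltnP => // k_lt; rewrite dimE' big_nat_cond [RHS]big_nat_cond.
apply: eq_bigr => j /andP[/andP[_ j_lt] _].
by rewrite coordV_place eqxx /= dimE' j_lt restr'.
Qed.

Lemma dmap_place_lift U b e' w : w \in summand (phiE e') ->
  (dmap F' b (place phiE e' w) \in lift phiV U) = (dmap F b w \in U).
Proof.
move=> w_in; rewrite dmap_place // (place_mem_lift dimV') // -(morphism_endpt morph).
exact: dmap_summand.
Qed.

Lemma dim_Gamma_lift U m : (forall e, #|[pred e' | phiE e' == e]| = m) ->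
  \dim (Gamma_ht F' (lift phiV U)) = (m * \dim (Gamma_ht F U))%N.
Proof.
move=> fibre_m; rewrite /Gamma_ht !dim_sum_summands => [|e|e]; last 2 first.
- by rewrite -capvA capvSl.
- by rewrite -capvA capvSl.
rewrite -(sum_constant_fibres
  (fun e => \dim (SuppE F e :&: (d_h F @^-1: U) :&: (d_t F @^-1: U))) fibre_m).
apply: eq_bigr => e' _.
apply: (dimv_eq_inverse (f := push phiE e') (g := place phiE e')) => w;
  rewrite !memv_cap -!memv_preim !SuppE_summand /d_h /d_t => /andP[/andP[w_in dhw] dtw].
  have pw_in : (push phiE e' w : FE F) \in summand (phiE e') := push_in_summand _ _.
  have w_eq : place phiE e' (push phiE e' w : FE F) = w.
    by rewrite (place_push dimE') (prj_summand _ w_in) eqxx.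
  by rewrite pw_in -!(dmap_place_lift U _ pw_in) w_eq dhw dtw.
split; last by rewrite (push_place dimE') (prj_summand _ w_in) eqxx.
by rewrite place_in_summand !(dmap_place_lift U _ w_in) dhw dtw.
Qed.

Lemma excess_lift U m : is_split U ->
  (forall v, #|[pred v' | phiV v' == v]| = m) ->
  (forall e, #|[pred e' | phiE e' == e]| = m) ->
  excess F' (lift phiV U) = m%:Z * excess F U.
Proof.
move=> splitU fibreV fibreE.
by rewrite /excess (dim_Gamma_lift _ fibreE) (dim_lift dimV' splitU fibreV) !PoszM mulrBr.
Qed.

End LiftExcess.

Definition sel (T : Type) (k : bool) (p : T * T) := if k then p.1 else p.2.
Definition oth (T : Type) (k : bool) (p : T * T) := if k then p.2 else p.1.
Definition mkp (T : Type) (k : bool) (a b : T) := if k then (a, b) else (b, a).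

Lemma sel_mkp T k (a b : T) : sel k (mkp k a b) = a. Proof. by case: k. Qed.
Lemma oth_mkp T k (a b : T) : oth k (mkp k a b) = b. Proof. by case: k. Qed.
Lemma mkp_eta T k (p : T * T) : p = mkp k (sel k p) (oth k p). Proof. by case: k; case: p. Qed.

Lemma mkp_map (T T' : Type) (f : T -> T') k (a b : T) :
  (f (mkp k a b).1, f (mkp k a b).2) = mkp k (f a) (f b).
Proof. by case: k. Qed.

Lemma oth_map (T T' : Type) (f : T -> T') k (p : T * T) : oth k (f p.1, f p.2) = f (oth k p).
Proof. by case: k. Qed.

Definition off_diagonal (T S : finType) (f : T -> S) (p : T * T) :=
  (f p.1 == f p.2) && (p.1 != p.2).

Definition fibre_square (T S : finType) (f : T -> S) := {p : T * T | off_diagonal f p}.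

Lemma off_diagonal_mkp (T S : finType) (f : T -> S) k (a b : T) :
  off_diagonal f (mkp k a b) = (f a == f b) && (a != b).
Proof. by case: k; rewrite /off_diagonal //= eq_sym [b == a]eq_sym. Qed.

Lemma off_diagonal_sel (T S : finType) (f : T -> S) k (p : T * T) :
  off_diagonal f p -> f (oth k p) = f (sel k p) /\ oth k p != sel k p.
Proof. by case: k => /andP[/eqP f12 ne12]; split; rewrite //= ?f12 // eq_sym. Qed.

(* Seen from one coordinate, the point x has the other points of its fibre as
   partners, so the fibres of either projection are one smaller than those of f. *)
Lemma card_fibre_square (T S : finType) (f : T -> S) k d x :
  #|[pred y | f y == f x]| = d.+1 ->
  #|[pred q : fibre_square f | sel k (val q) == x]| = d.
Proof.
rewrite (cardD1 x) inE eqxx add1n => -[<-].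
have oth_inj : {in [pred q : fibre_square f | sel k (val q) == x] &, injective (oth k \o val)}.
  move=> q1 q2; rewrite !inE => /eqP sel1 /eqP sel2 /= oth12; apply: val_inj.
  by rewrite [val q1](mkp_eta k) [val q2](mkp_eta k) sel1 sel2 oth12.
rewrite -(card_in_image oth_inj); apply: eq_card => y; rewrite !inE.
apply/imageP/andP => [[q] /[!inE] /eqP sel_q -> /=|[y_x /eqP fy]].
  by have [f_eq ne] := off_diagonal_sel k (valP q); rewrite -sel_q f_eq eqxx.
have pair_yx : off_diagonal f (mkp k x y) by rewrite off_diagonal_mkp fy eqxx eq_sym.
by exists (exist (off_diagonal f) _ pair_yx); rewrite /= ?inE ?sel_mkp ?oth_mkp.
Qed.

(* The fibre product of a covering with itself, minus its diagonal: vertices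
   and edges are pairs of distinct points of a common fibre. *)
Section FibreProduct.
Variables (G' G : digraph) (phiV : vert G' -> vert G) (phiE : edge G' -> edge G).
Hypothesis cover : is_covering phiV phiE.

Let covering_endpt : forall b e', endpt b (phiE e') = phiV (endpt b e').
Proof. exact: morphism_endpt (proj1 cover). Qed.

Lemma covering_lift b v' e :
  endpt b e = phiV v' -> exists! e', endpt b e' = v' /\ phiE e' = e.
Proof.
by case: cover => _ [hd_lift tl_lift]; case: b; [apply: hd_lift | apply: tl_lift].
Qed.

Lemma covering_endpt_inj b a a' : phiE a = phiE a' -> endpt b a = endpt b a' -> a = a'.
Proof.
move=> same_image same_endpt.
have [e0 [_ uniq_lift]] := covering_lift (covering_endpt b a).
rewrite -(uniq_lift a (conj erefl erefl)).
exact: uniq_lift a' (conj (esym same_endpt) (esym same_image)).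
Qed.

Lemma endpt_off_diagonal b (q : fibre_square phiE) :
  off_diagonal phiV (endpt b (val q).1, endpt b (val q).2).
Proof.
case: q => -[a a'] /= /andP[/eqP same_image a_a'].
rewrite /off_diagonal /= -!covering_endpt same_image eqxx /=.
by apply: contra_neq a_a'; apply: covering_endpt_inj.
Qed.

Definition endpt_square b (q : fibre_square phiE) : fibre_square phiV :=
  exist (off_diagonal phiV) _ (endpt_off_diagonal b q).

Definition square_graph : digraph := Digraph (endpt_square false) (endpt_square true).

Definition projV (k : bool) (q : vert square_graph) : vert G' := sel k (val q).
Definition projE (k : bool) (q : edge square_graph) : edge G' := sel k (val q).

Lemma val_endpt_square b (q : edge square_graph) :
  val (endpt b q) = (endpt b (val q).1, endpt b (val q).2).
Proof. by case: b. Qed.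

(* Given q = (x, y) (in the order chosen by k) and an edge a at x, the unique
   lift c of phiE a at y gives the unique edge (a, c) of the square at q. *)
Lemma proj_covering k : is_covering (projV k) (projE k).
Proof.
split; first by split => q; case: k.
suff lift_at b : forall (q : vert square_graph) (a : edge G'), endpt b a = projV k q ->
    exists! q' : edge square_graph, endpt b q' = q /\ projE k q' = a.
  by split; [apply: (lift_at true) | apply: (lift_at false)].
move=> q a a_at_q; have [same_fibre q_ne] := off_diagonal_sel k (valP q).
have [c [[c_at same_image] c_uniq]] :
    exists! c, endpt b c = oth k (val q) /\ phiE c = phiE a.
  by apply: covering_lift; rewrite covering_endpt a_at_q same_fibre.
have pair_ac : off_diagonal phiE (mkp k a c).
  rewrite off_diagonal_mkp same_image eqxx /=.
  by apply: contra_neq q_ne => a_c; rewrite -c_at -a_c a_at_q.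
exists (exist (off_diagonal phiE) _ pair_ac); split.
  split; last by rewrite /projE /= sel_mkp.
  by apply: val_inj; rewrite val_endpt_square /= mkp_map a_at_q c_at -mkp_eta.
move=> q' [q'_at q'_a]; apply: val_inj => /=.
rewrite [val q'](mkp_eta k); congr (mkp k _ _); first exact: (esym q'_a).
apply: c_uniq; split; last first.
  by have [-> _] := off_diagonal_sel k (valP q'); rewrite -q'_a.
by rewrite -(oth_map (endpt b)) -val_endpt_square q'_at.
Qed.

End FibreProduct.

Definition lifts_largest_maximizer (K : fieldType) (d : nat) : Prop :=
  forall (G' G : digraph) (phiV : vert G' -> vert G) (phiE : edge G' -> edge G)
    (F : sheaf K G) (F' : sheaf K G'),
  is_covering phiV phiE ->
  (forall v, #|[pred v' | phiV v' == v]| = d) ->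
  (forall e, #|[pred e' | phiE e' == e]| = d) ->
  is_pullback phiV phiE F F' ->
  forall W, is_largest_maximizer F W -> is_largest_maximizer F' (lift phiV W).

Section InductionStep.
Variables (K : fieldType) (G' G : digraph) (phiV : vert G' -> vert G)
  (phiE : edge G' -> edge G) (F : sheaf K G) (F' : sheaf K G') (d : nat).
Hypothesis pbF : is_pullback phiV phiE F F'.
Hypothesis cover : is_covering phiV phiE.
Hypothesis fibreV : forall v, #|[pred v' | phiV v' == v]| = d.+1.
Hypothesis fibreE : forall e, #|[pred e' | phiE e' == e]| = d.+1.
Hypothesis IH : lifts_largest_maximizer K d.

Local Notation G2 := (square_graph cover).
Local Notation p1V := (projV (cover := cover) true).
Local Notation p2V := (projV (cover := cover) false).
Local Notation p1E := (projE (cover := cover) true).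
Local Notation p2E := (projE (cover := cover) false).

Let dimV' v' : shdimv F' v' = shdimv F (phiV v'). Proof. by case: pbF. Qed.

(* The sheaf on the square, pulled back from F' along the first projection,
   is also the pullback of F' along the second one, since both go through F. *)
Definition square_sheaf : sheaf K G2 := pullback p1V p1E F'.

Lemma square_sheaf_pullback1 : is_pullback p1V p1E F' square_sheaf.
Proof. by split. Qed.

Lemma square_sheaf_pullback2 : is_pullback p2V p2E F' square_sheaf.
Proof.
case: pbF => dimV dimE reshE restE; split => q /=; rewrite ?dimV ?dimE ?reshE ?restE;
  by have [-> _] := off_diagonal_sel true (valP q).
Qed.

Lemma lift_square_largest k W : is_largest_maximizer F' W ->
  is_largest_maximizer square_sheaf (lift (projV (cover := cover) k) W).
Proof.
move=> largeW; apply: (IH (proj_covering cover k)) largeW => [x'|a|].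
- by apply: card_fibre_square; apply: fibreV.
- by apply: card_fibre_square; apply: fibreE.
- by case: k; [exact: square_sheaf_pullback1 | exact: square_sheaf_pullback2].
Qed.

(* The key consequence of the induction hypothesis: the largest maximizer W of
   F' is invariant under moving a component within a fibre.  Indeed its lifts
   along the two projections of the square coincide (both are the largest
   maximizer of the square sheaf), and the copy of c at the pair (y, x) is seen
   by the first projection at y and by the second one at x. *)
Lemma largest_maximizer_fibre_invariant W : is_largest_maximizer F' W ->
  forall x y (c : FV F'), phiV x = phiV y -> c \in summand y ->
  (place phiV x (push phiV y c : FV F) \in W) = (c \in W).
Proof.
move=> largeW x y c same_fibre c_in.
have [->|x_y] := eqVneq x y.
  by rewrite (place_push dimV') (prj_summand _ c_in) eqxx.
have pair_yx : off_diagonal phiV (y, x) by rewrite /off_diagonal /= same_fibre eqxx eq_sym.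
pose q : vert G2 := exist (off_diagonal phiV) _ pair_yx.
pose c' : FV F' := place phiV x (push phiV y c : FV F).
have lifts_eq := largest_maximizer_uniq (lift_square_largest true largeW)
                                        (lift_square_largest false largeW).
have dim1 : forall q, shdimv square_sheaf q = shdimv F' (p1V q) by [].
have dim2 : forall q, shdimv square_sheaf q = shdimv F' (p2V q).
  by case: square_sheaf_pullback2.
have same_copy : place p1V q c = place p2V q c' :> FV square_sheaf.
  apply: coordV_ext => l k; rewrite !coordV_place /=.
  case: eqP => [->|] //=; case: ltnP => // k_lt.
  by move: k_lt; rewrite eqxx !dimV' same_fibre eqxx => ->.
have seen_at_x : ((place p2V q c' : FV square_sheaf) \in lift p2V W) = (c' \in W).
  exact: (place_mem_lift dim2 W (i' := q) (place_in_summand x _)).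
have seen_at_y : ((place p1V q c : FV square_sheaf) \in lift p1V W) = (c \in W).
  exact: (place_mem_lift dim1 W (i' := q) c_in).
by rewrite -seen_at_x -same_copy -lifts_eq seen_at_y.
Qed.

(* The largest maximizer W of F' is the lift of a split U (by fibre invariance);
   as lifting multiplies excesses by d + 1, U is a maximizer, hence U <= V, and
   the lift of V is a maximizer, hence contained in W. *)
Lemma lift_largest_maximizer_step V :
  is_largest_maximizer F V -> is_largest_maximizer F' (lift phiV V).
Proof.
move=> largeV; have [W largeW] := largest_maximizer_exists F'.
pose U := descend phiV (n := shdimv F) W.
have W_U : lift phiV U = W.
  apply: (lift_descend dimV' (largest_maximizer_split largeW)).
  exact: largest_maximizer_fibre_invariant.
have morph : is_morphism phiV phiE by case: cover.
have exW : excess F' W = (d.+1)%:Z * excess F U.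
  by rewrite -W_U (excess_lift pbF morph (descend_split (W := W)) fibreV fibreE).
have exV : excess F' (lift phiV V) = (d.+1)%:Z * excess F V.
  exact: (excess_lift pbF morph (largest_maximizer_split largeV) fibreV fibreE).
have exU_V : excess F U = excess F V.
  apply/eqP; rewrite eq_le (proj1 largeV U) /=.
  by rewrite -(@ler_pM2l _ (d.+1)%:Z) // -exW -exV (proj1 largeW).
have sWV : (W <= lift phiV V)%VS by rewrite -W_U liftS // (proj2 largeV).
have sVW : (lift phiV V <= W)%VS by rewrite (proj2 largeW) // exW exV exU_V.
by have -> : lift phiV V = W by apply/subv_anti; rewrite sWV sVW.
Qed.
End InductionStep.

(* With fibres of size 0 the covering graph is empty, so all its subspaces are
   zero and have excess zero. *)
Lemma lift_largest_maximizer0 (K : fieldType) : lifts_largest_maximizer K 0.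
Proof.
move=> G' G phiV phiE F F' _ fibreV fibreE _ V _.
have no_vert (v' : vert G') : False.
  by move/card0_eq: (fibreV (phiV v')) => /(_ v'); rewrite inE eqxx.
have no_edge (e' : edge G') : False.
  by move/card0_eq: (fibreE (phiE e')) => /(_ e'); rewrite inE eqxx.
have excess0 U : excess F' U = 0.
  by rewrite /excess (Fsp_empty_subspace no_edge (Gamma_ht F' U))
             (Fsp_empty_subspace no_vert U) !dimv0.
by split=> [U|U _]; rewrite ?excess0 // (Fsp_empty_subspace no_vert U) sub0v.
Qed.

Lemma lift_largest_maximizer (K : fieldType) (d : nat) : lifts_largest_maximizer K d.
Proof.
elim: d => [|d IH]; first exact: lift_largest_maximizer0.
move=> G' G phiV phiE F F' cover fibreV fibreE pbF.
exact: (lift_largest_maximizer_step pbF cover fibreV fibreE IH).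
Qed.

(* The maximum excess of F is attained at its largest
   maximizer V, which is split; the lift of V is the largest maximizer of the
   pullback and has d times the excess of V.  A maximizer of the form
   (+)_v U_v lifts to (+)_v' U_(phi v'), which has the same excess as the lift
   of V. *)
Theorem theorem1 (K : fieldType) (G' G : digraph)
  (phiV : vert G' -> vert G) (phiE : edge G' -> edge G) (d : nat)
  (F : sheaf K G) :
  is_covering phiV phiE ->
  (forall v : vert G, #|[pred v' | phiV v' == v]| = d) ->
  (forall e : edge G, #|[pred e' | phiE e' == e]| = d) ->
  (exists z : int, is_max_excess F z /\
                   is_max_excess (pullback phiV phiE F) (d%:Z * z)) /\
  (forall Uv : vert G -> {vspace FV F},
     (forall v, (Uv v <= SuppV F v)%VS) ->
     attains_max_excess F (\sum_(v : vert G) Uv v)%VS ->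
     attains_max_excess (pullback phiV phiE F)
       (\sum_(v' : vert G') ((liftV phiV (shdimv F) v') @: Uv (phiV v')))%VS).
Proof.
move=> cover fibreV fibreE; set F' := pullback phiV phiE F.
have pbF : is_pullback phiV phiE F F' by [].
have morph : is_morphism phiV phiE by case: cover.
have [V largeV] := largest_maximizer_exists F.
have [maxV' _] := lift_largest_maximizer cover fibreV fibreE pbF largeV.
have exV' := excess_lift pbF morph (largest_maximizer_split largeV) fibreV fibreE.
split.
  exists (excess F V); split; first by split; [exists V | exact: (proj1 largeV)].
  by split; [exists (lift phiV V) | move=> U; rewrite -exV'; exact: maxV'].
move=> Uv sUv maxU; have dimV' v' : shdimv F' v' = shdimv F (phiV v') by [].
have -> : (\sum_v' (liftV phiV (shdimv F) v' @: Uv (phiV v')))%VS =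
           lift phiV (\sum_v Uv v)%VS.
  by rewrite (lift_sum_summands dimV' sUv).
have exU : excess F (\sum_v Uv v) = excess F V.
  by apply/eqP; rewrite eq_le maxU (proj1 largeV).
move=> U'; rewrite (excess_lift pbF morph (split_sum_summands sUv) fibreV fibreE).
by rewrite exU -exV'; exact: maxV'.
Qed.
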